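(* Let $\mathbb F$ be an algebraically closed field of characteristic $p\neq 2$, let $S=\{R_0,\dots,R_d\}$ be a quasi-thin scheme on $X$ with $\mathcal A_2=\{a\in\{0,\dots,d\}:k_a=2\}\neq\varnothing$, let $x\in X$ and $\mathcal T=\mathcal T(x)$. Define the relation $\sim$ on $\mathcal A_2$ by $b\sim c$ if and only if $|R_{b'}R_c|=2$ or $(b,c)$ is a bad pair of $S$ (this is an equivalence relation), and let $\mathcal C_0,\dots,\mathcal C_\gamma$ be its distinct equivalence classes. Then $\mathcal T\cong M_{d+1}(\mathbb F)\oplus\bigoplus_{a=0}^{\gamma}M_{|\mathcal C_a|}(\mathbb F)$ as $\mathbb F$-algebras, where $M_n(\mathbb F)$ is the algebra of $n\times n$ matrices over $\mathbb F$.
   Context: Let $X$ be a nonempty finite set. A scheme of class $d$ on $X$ is a partition $S=\{R_0,\dots,R_d\}$ of $X\times X$ into nonempty sets such that $R_0=\{(b,b):b\in X\}$; for each $c$ there is $c'$ with $R_{c'}=\{(f,e):(e,f)\in R_c\}$; and for all $i,j,k$ the intersection number $p_{ij}^k=|\{\ell\in X:(m,\ell)\in R_i,(\ell,n)\in R_j\}|$ does not depend on $(m,n)\in R_k$. The valency is $k_a=p_{aa'}^0$; quasi-thin means all $k_a\le 2$; complex product $R_aR_b=\{R_c:p_{ab}^c>0\}$. For $y\in X$, $yR_a=\{z:(y,z)\in R_a\}$; $A_a\in M_X(\mathbb F)$ is the $(0,1)$ adjacency matrix of $R_a$, $E_a^*(y)$ is the diagonal $(0,1)$-matrix with ones exactly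 at positions indexed by $yR_a$, and $\mathcal T(y)$ is the $\mathbb F$-subalgebra of $M_X(\mathbb F)$ generated by $A_0,\dots,A_d,E_0^*(y),\dots,E_d^*(y)$. Bad pair: $(u,v)$ is a bad pair of $S$ if there exist an integer $a\ge1$ and $R_{i_b},R_{j_b},R_{\ell_b}\in S$ ($b=0,\dots,a$) with $i_0=u$, $\ell_a=v$, $k_{i_b}=k_{\ell_b}=2$ and $p_{i_bj_b}^{\ell_b}=1$ for all $b$, $\ell_c=i_{c+1}$ for $0\le c\le a-1$, and $|R_{u'}R_v|=1$. *)

From HB Require Import structures.
From mathcomp Require Import all_boot all_order all_algebra all_field.
Set Implicit Arguments. Unset Strict Implicit. Unset Printing Implicit Defensive.
Import GRing.Theory.
Section Scheme.
Variables (X : finType) (d : nat).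
(* A scheme of class d on X is encoded by the map r sending (m,n) to the
   index c such that (m,n) \in R_c. *)
Variable r : X -> X -> 'I_d.+1.

Definition pnum (i j : 'I_d.+1) (m n : X) : nat :=
  #|[set l | (r m l == i) && (r l n == j)]|.

Definition is_scheme : Prop :=
  [/\ (forall c, exists m n, r m n = c),
      (forall m n, (r m n == ord0) = (m == n)),
      (forall c, exists c', forall m n, r m n = c' <-> r n m = c)
    & (forall i j m n m' n', r m n = r m' n' -> pnum i j m n = pnum i j m' n')].

Definition trn (c : 'I_d.+1) : 'I_d.+1 :=
  if [pick mn : X * X | r mn.1 mn.2 == c] is Some mn then r mn.2 mn.1 else c.

Definition pint (i j k : 'I_d.+1) : nat :=
  if [pick mn : X * X | r mn.1 mn.2 == k] is Some mn then pnum i j mn.1 mn.2 else 0.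

Definition valency (a : 'I_d.+1) : nat := pint a (trn a) ord0.

Definition quasi_thin : Prop := forall a, valency a <= 2.

Definition cprod (a b : 'I_d.+1) : {set 'I_d.+1} := [set c | 0 < pint a b c].

Definition bad_pair (u v : 'I_d.+1) : Prop :=
  (exists (a : nat) (i j l : nat -> 'I_d.+1),
     [/\ 1 <= a, i 0 = u, l a = v,
         (forall b, b <= a ->
            [/\ valency (i b) = 2, valency (l b) = 2 & pint (i b) (j b) (l b) = 1])
       & (forall c, c < a -> l c = i c.+1)])
  /\ #|cprod (trn u) v| = 1.

Definition A2 (a : 'I_d.+1) : Prop := valency a = 2.

Definition sim (b c : 'I_d.+1) : Prop :=
  #|cprod (trn b) c| = 2 \/ bad_pair b c.

Definition is_class (C : {set 'I_d.+1}) : Prop :=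
  exists b, A2 b /\ forall c, c \in C <-> (A2 c /\ sim b c).

End Scheme.

Local Open Scope ring_scope.

Inductive gen_alg (F : fieldType) (n : nat) (G : 'M[F]_n -> Prop) : 'M[F]_n -> Prop :=
| ga_gen A : G A -> gen_alg G A
| ga_one : gen_alg G 1%:M
| ga_add A B : gen_alg G A -> gen_alg G B -> gen_alg G (A + B)
| ga_scale (c : F) A : gen_alg G A -> gen_alg G (c *: A)
| ga_mul A B : gen_alg G A -> gen_alg G B -> gen_alg G (A *m B).

Section Terwilliger.
Variables (F : fieldType) (X : finType) (d : nat) (r : X -> X -> 'I_d.+1).

(* M_X(F) is realised as 'M[F]_#|X|, rows/columns indexed via enum_val. *)
Definition adjmx (a : 'I_d.+1) : 'M[F]_#|X| :=
  \matrix_(i, j) ((r (enum_val i) (enum_val j) == a)%:R).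

Definition dualidm (y : X) (a : 'I_d.+1) : 'M[F]_#|X| :=
  \matrix_(i, j) (((i == j) && (r y (enum_val i) == a))%:R).

Definition terw (y : X) : 'M[F]_#|X| -> Prop :=
  gen_alg (fun M => exists a, M = adjmx a \/ M = dualidm y a).
End Terwilliger.

Definition alg_hom_on (F : fieldType) (n m : nat) (T : 'M[F]_n -> Prop)
  (f : 'M[F]_n -> 'M[F]_m) : Prop :=
  [/\ f 1%:M = 1%:M,
      (forall A B, T A -> T B -> f (A + B) = f A + f B),
      (forall (c : F) A, T A -> f (c *: A) = c *: f A)
    & (forall A B, T A -> T B -> f (A *m B) = f A *m f B)].

From HB Require Import structures.
From mathcomp Require Import all_boot all_order all_algebra all_field.
From mathcomp Require Import ring.

Set Implicit Arguments. Unset Strict Implicit. Unset Printing Implicit Defensive.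
Import GRing.Theory.

(* Fix x and let xR a be the set of z with (x, z) in R_a; quasi-thinness means
   |xR a| is 1 or 2.  Call m and l linked when some y in xR m is related to the
   two points of xR l by different relations.  Counting with intersection
   numbers shows that linking is symmetric and that then every y in xR m
   separates xR l; hence |R_m' R_l| = 1 + [m linked l], a bad pair is a chain of
   linked steps, and ~ is connectivity under linking, an equivalence on A2.

   The standard module F^X then splits into T-invariant pieces: the span of the
   characteristic vectors of the sets xR l (the primary module, of dimension
   d+1) and, for each class C, the span of the differences of the two points of
   xR l for l in C; invariance again comes from the separation property.  As 2
   is invertible these vectors span F^X, so T acts faithfully on the pieces, and
   T contains all their matrix units: E*_i J E*_l / |xR l| on the primary
   module, and products of E*_i A_j (E*_l - E*_l J E*_l / 2) along chains of
   linked indices on the class modules. *)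

Lemma set2_of_card_le2 (T : finType) (A : {set T}) p q :
  #|A| <= 2 -> p \in A -> q \in A -> p != q -> A = [set p; q].
Proof.
move=> A_le2 pA qA npq; apply/esym/eqP; rewrite eqEcard cards2 npq A_le2 andbT.
by apply/subsetP => z; rewrite !inE => /orP [] /eqP ->.
Qed.

Section QuasiThinScheme.
Variables (X : finType) (d : nat) (r : X -> X -> 'I_d.+1).
Hypothesis scheme_r : is_scheme r.

Lemma rel_nonempty c : exists m n, r m n = c.
Proof. by case: scheme_r. Qed.

Lemma rel_diag m n : (r m n == ord0) = (m == n).
Proof. by case: scheme_r. Qed.

Lemma pnum_const i j m n m' n' :
  r m n = r m' n' -> pnum r i j m n = pnum r i j m' n'.
Proof. by case: scheme_r => _ _ _; apply. Qed.

Lemma rel_transpose m n m' n' : r m n = r m' n' -> r n m = r n' m'.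
Proof.
case: scheme_r => _ _ trS _ Emn; have [c' Hc'] := trS (r m n).
by rewrite (proj2 (Hc' n m)) // (proj2 (Hc' n' m')) // Emn.
Qed.

Lemma rel_transpose_eq m n m' n' : (r n m == r n' m') = (r m n == r m' n').
Proof. by apply/eqP/eqP => /rel_transpose. Qed.

Lemma trnP c m n : (r m n == trn r c) = (r n m == c).
Proof.
rewrite /trn; case: pickP => [[m' n'] /= /eqP <-|none].
  by rewrite rel_transpose_eq.
by have [m0 [n0 E0]] := rel_nonempty c; move: (none (m0, n0)); rewrite /= E0 eqxx.
Qed.

(** * Subconstituents of a quasi-thin scheme *)

Variable x : X.

Definition xR a := [set y | r x y == a].

Lemma xRP a y : (y \in xR a) = (r x y == a).
Proof. by rewrite inE. Qed.

Lemma xR_rel a y : y \in xR a -> r x y = a.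
Proof. by rewrite xRP => /eqP. Qed.

Lemma pnum_trn_diag m a : pnum r a (trn r a) m m = #|[set l | r m l == a]|.
Proof. by apply: eq_card => l; rewrite !inE trnP andb_idr // => /eqP->. Qed.

Lemma card_row m a : #|[set l | r m l == a]| = #|xR a|.
Proof.
rewrite /xR -!pnum_trn_diag; apply: pnum_const.
by move: (rel_diag m m) (rel_diag x x); rewrite !eqxx => /eqP-> /eqP->.
Qed.

Lemma valencyE a : valency r a = #|xR a|.
Proof.
rewrite /valency /pint; case: pickP => [[m n] /= /eqP Emn|none].
  have /eqP <- : m == n by rewrite -rel_diag Emn.
  by rewrite pnum_trn_diag card_row.
by move: (none (x, x)); rewrite /= rel_diag eqxx.
Qed.

Lemma xR_card_gt0 a : 0 < #|xR a|.
Proof.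
have [m [n Emn]] := rel_nonempty a; rewrite -(card_row m).
by apply/card_gt0P; exists n; rewrite inE Emn.
Qed.

Lemma card_row_fibre l e y y' : r x y = r x y' ->
  #|[set z in xR l | r y z == e]| = #|[set z in xR l | r y' z == e]|.
Proof.
move=> Eyy'.
have fibreE w : #|[set z in xR l | r w z == e]| = pnum r e (trn r l) w x.
  by apply: eq_card => z; rewrite !inE andbC trnP.
by rewrite !fibreE; apply: pnum_const; apply: rel_transpose.
Qed.

Lemma card_col_fibre i e z z' : r x z = r x z' ->
  #|[set y in xR i | r y z == e]| = #|[set y in xR i | r y z' == e]|.
Proof.
move=> Ezz'; have fibreE w : #|[set y in xR i | r y w == e]| = pnum r i e x w.
  by apply: eq_card => y; rewrite !inE.
by rewrite !fibreE; apply: pnum_const.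
Qed.

Lemma row_transfer l y y' z : r x y = r x y' -> z \in xR l ->
  exists2 z', z' \in xR l & r y' z' = r y z.
Proof.
move=> Eyy' zl; have : 0 < #|[set z' in xR l | r y' z' == r y z]|.
  by rewrite -(card_row_fibre _ _ Eyy'); apply/card_gt0P; exists z; rewrite inE zl /=.
by case/card_gt0P => z'; rewrite inE => /andP [z'l /eqP]; exists z'.
Qed.

Lemma col_transfer i y z z' : r x z = r x z' -> y \in xR i ->
  exists2 y', y' \in xR i & r y' z' = r y z.
Proof.
move=> Ezz' yi; have : 0 < #|[set y' in xR i | r y' z' == r y z]|.
  by rewrite -(card_col_fibre _ _ Ezz'); apply/card_gt0P; exists y; rewrite inE yi /=.
by case/card_gt0P => y'; rewrite inE => /andP [y'i /eqP]; exists y'.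
Qed.

Hypothesis quasi_thin_r : quasi_thin r.

Lemma xR_card_le2 a : #|xR a| <= 2.
Proof. by rewrite -valencyE; apply: quasi_thin_r. Qed.

Definition pt1 a := odflt x [pick y in xR a].
(* [pt2 a] is a meaningless default unless [#|xR a| = 2]. *)
Definition pt2 a := odflt x [pick y in xR a :\ pt1 a].

Lemma pt1P a : r x (pt1 a) = a.
Proof.
rewrite /pt1; case: pickP => [y|none] /=; first by rewrite inE => /eqP.
by have /card_gt0P [y] := xR_card_gt0 a; rewrite none.
Qed.

Lemma pt1_in a : pt1 a \in xR a.
Proof. by rewrite xRP pt1P. Qed.

Section TwoPoints.
Variable a : 'I_d.+1.
Hypothesis card_xR2 : #|xR a| = 2.

Lemma pt2_spec : pt2 a \in xR a :\ pt1 a.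
Proof.
rewrite /pt2; case: pickP => [y|none] //=.
have := card_xR2; rewrite (cardsD1 (pt1 a)) pt1_in add1n => -[] /esym card1.
have /card_gt0P [y] : 0 < #|xR a :\ pt1 a| by rewrite card1.
by rewrite none.
Qed.

Lemma pt2_in : pt2 a \in xR a.
Proof. by have /setD1P [] := pt2_spec. Qed.

Lemma pt2P : r x (pt2 a) = a.
Proof. by apply/eqP; rewrite -xRP pt2_in. Qed.

Lemma pt2_neq : pt2 a != pt1 a.
Proof. by have /setD1P [] := pt2_spec. Qed.

Lemma xR2E : xR a = [set pt1 a; pt2 a].
Proof. by rewrite (set2_of_card_le2 (xR_card_le2 a) (pt1_in a) pt2_in) // eq_sym pt2_neq. Qed.

End TwoPoints.

(** * Linked indices and the relation ~ *)

Definition linked m l :=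
  [exists y in xR m, exists p in xR l, exists q in xR l, r y p != r y q].

Lemma linked_row m l y p q : linked m l ->
  y \in xR m -> p \in xR l -> q \in xR l -> p != q -> r y p != r y q.
Proof.
case/exists_inP=> y0 y0m /exists_inP [p0 p0l /exists_inP [q0 q0l neq0]].
move=> ym pl ql npq; apply: contra neq0 => /eqP eq_pq.
set e := r y p.
have xRl := set2_of_card_le2 (xR_card_le2 l) pl ql npq.
have fibre_y : [set z in xR l | r y z == e] = xR l.
  apply/setP => z; apply/setIdP/idP => [[] //|zl]; split=> //.
  by move: zl; rewrite xRl !inE /e => /orP [] /eqP ->; rewrite ?eq_pq.
have /eqP fibre_y0 : [set z in xR l | r y0 z == e] == xR l.
  rewrite eqEcard; apply/andP; split; first by apply/subsetP => z /setIdP [].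
  rewrite -{1}fibre_y (card_row_fibre _ _ (y' := y0)) //.
  by move: ym y0m; rewrite !xRP => /eqP -> /eqP ->.
have fibre_y0P z : z \in xR l -> r y0 z = e.
  by rewrite -{1}fibre_y0 => /setIdP [_ /eqP].
by rewrite !fibre_y0P.
Qed.

Lemma linked_col m l y y' z : y \in xR m -> y' \in xR m -> z \in xR l ->
  r y z != r y' z -> linked l m.
Proof.
move=> ym y'm zl neq; apply/exists_inP; exists z => //.
apply/exists_inP; exists y => //; apply/exists_inP; exists y' => //.
by rewrite rel_transpose_eq.
Qed.

Lemma linked_sym m l : linked m l -> linked l m.
Proof.
case/exists_inP=> y0 y0m /exists_inP [p0 p0l /exists_inP [q0 q0l neq0]].
have [|y1 y1m E1] := col_transfer (z := p0) (z' := q0) _ y0m.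
  by move: p0l q0l; rewrite !xRP => /eqP -> /eqP ->.
by apply: (linked_col y1m y0m q0l); rewrite E1.
Qed.

Lemma linked_card2 m l : linked m l -> #|xR l| = 2.
Proof.
case/exists_inP=> y _ /exists_inP [p pl /exists_inP [q ql neq]].
have npq : p != q by apply: contraNneq neq => ->.
by rewrite (set2_of_card_le2 (xR_card_le2 l) pl ql npq) cards2 npq.
Qed.

Lemma linked_refl b : #|xR b| = 2 -> linked b b.
Proof.
move=> card_b; apply/exists_inP; exists (pt1 b); first exact: pt1_in.
apply/exists_inP; exists (pt1 b); first exact: pt1_in.
apply/exists_inP; exists (pt2 b); first exact: pt2_in.
rewrite (eqP (_ : r (pt1 b) (pt1 b) == ord0)) ?rel_diag //.
by rewrite eq_sym rel_diag eq_sym pt2_neq.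
Qed.

Lemma cprod_trnE b c : cprod r (trn r b) c = [set r (pt1 b) z | z in xR c].
Proof.
apply/setP => e; rewrite inE /pint; case: pickP => [[m n] /= /eqP Emn|none].
  apply/idP/imsetP => [/card_gt0P [l]|[z zc Ez]].
    rewrite inE trnP => /andP [lmb /eqP lnc].
    have : 0 < pnum r b e x (pt1 c).
      rewrite (@pnum_const _ _ _ _ l n); last by rewrite pt1P.
      by apply/card_gt0P; exists m; rewrite inE lmb Emn eqxx.
    case/card_gt0P => y; rewrite inE -xRP => /andP [yb /eqP <-].
    have [|z zc Ez] := row_transfer (y := y) (y' := pt1 b) _ (pt1_in c).
      by move: yb; rewrite xRP pt1P => /eqP.
    by exists z; rewrite ?Ez.
  have -> : pnum r (trn r b) c m n = pnum r (trn r b) c (pt1 b) z.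
    by apply: pnum_const; rewrite Emn.
  by apply/card_gt0P; exists x; rewrite inE trnP pt1P eqxx -xRP zc.
apply/idP/imsetP => [|[z _ Ez]]; first by rewrite ltnn.
by move: (none (pt1 b, z)); rewrite /= Ez eqxx.
Qed.

Lemma card_cprod_trn b c : #|cprod r (trn r b) c| = (linked b c).+1.
Proof.
rewrite cprod_trnE; case: (boolP (linked b c)) => lk.
  rewrite card_in_imset ?(linked_card2 lk) // => z z' zc z'c.
  by apply: contra_eq => nz; apply: linked_row lk (pt1_in b) zc z'c nz.
have const z : z \in xR c -> r (pt1 b) z = r (pt1 b) (pt1 c).
  move=> zc; apply/eqP; apply: contraNT lk => neq.
  apply/exists_inP; exists (pt1 b); first exact: pt1_in.
  by apply/exists_inP; exists z => //; apply/exists_inP; exists (pt1 c); first exact: pt1_in.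
rewrite (eq_in_imset const) (_ : [set _ | _ in xR c] = [set r (pt1 b) (pt1 c)]) ?cards1 //.
apply/setP => e; rewrite inE; apply/imsetP/eqP => [[z _ ->] //|->].
by exists (pt1 c); first exact: pt1_in.
Qed.

Lemma pint_pt1 i j l : pint r i j l = pnum r i j x (pt1 l).
Proof.
rewrite /pint; case: pickP => [[m n] /= /eqP Emn|none].
  by apply: pnum_const; rewrite Emn pt1P.
by move: (none (x, pt1 l)); rewrite /= pt1P eqxx.
Qed.

Lemma pint_eq1_linked i j l : #|xR i| = 2 -> pint r i j l = 1 -> linked i l.
Proof.
move=> card_i; rewrite pint_pt1 => pint1; apply/linked_sym.
apply: (linked_col (pt1_in i) (pt2_in card_i) (pt1_in l)); apply/negP => /eqP eq12.
have : #|[set u in xR i | r u (pt1 l) == j]| = 1.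
  by rewrite -pint1; apply: eq_card => u; rewrite !inE.
rewrite (_ : [set u in xR i | _] = if r (pt1 i) (pt1 l) == j then xR i else set0).
  by case: ifP; rewrite ?card_i ?cards0.
apply/setP => u; rewrite inE; case: (boolP (u \in xR i)) => /= [ui|/negbTE ui].
  have -> : r u (pt1 l) = r (pt1 i) (pt1 l).
    by move: ui; rewrite (xR2E card_i) !inE => /orP [] /eqP ->.
  by case: (_ == j); rewrite ?ui ?inE.
by case: (_ == j); rewrite ?ui ?inE.
Qed.

Lemma linked_pint_eq1 i l : linked i l -> pint r i (r (pt1 i) (pt1 l)) l = 1.
Proof.
move=> lk; have card_i := linked_card2 (linked_sym lk).
have neq : r (pt2 i) (pt1 l) != r (pt1 i) (pt1 l).
  rewrite rel_transpose_eq; apply: linked_row (linked_sym lk) _ _ _ (pt2_neq card_i).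
  - exact: pt1_in.
  - exact: pt2_in.
  - exact: pt1_in.
rewrite pint_pt1 /pnum -(cards1 (pt1 i)); apply: eq_card => u.
rewrite !inE -xRP; apply/andP/eqP => [[]|->]; last by rewrite pt1_in eqxx.
by rewrite (xR2E card_i) !inE => /orP [] /eqP -> // /eqP eq21; rewrite eq21 eqxx in neq.
Qed.

Definition link := [rel m l | linked m l].

Lemma link_sym : symmetric link.
Proof. by move=> m l; apply/idP/idP => /linked_sym. Qed.

Lemma bad_pair_connect b c : bad_pair r b c -> connect link b c.
Proof.
case=> -[a [i [j [l [_ i0 la steps chain]]]]] _.
have step k : k <= a -> linked (i k) (l k).
  by move=> le_ka; have [card_i _ pint1] := steps k le_ka;
    apply: (pint_eq1_linked (j := j k)); rewrite -?valencyE.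
suff reach k : k <= a -> connect link b (l k) by rewrite -la reach.
elim: k => [_|k IHk lt_ka]; first by rewrite -i0; apply/connect1/step.
by apply: connect_trans (IHk (ltnW lt_ka)) _; rewrite chain //; apply/connect1/step.
Qed.

Lemma connect_bad_pair b c : #|xR b| = 2 ->
  connect link b c -> ~~ linked b c -> bad_pair r b c.
Proof.
move=> card_b /connectP [p pth ->] nlk; split; last by rewrite card_cprod_trn (negbTE nlk).
case: p pth nlk => [|v1 [|v2 p]] pth nlk.
- by rewrite /= linked_refl in nlk.
- by move: pth nlk => /= /andP [-> _].
set s := [:: b, v1, v2 & p].
have lk k : k <= (size p).+1 -> linked (nth b s k) (nth b s k.+1).
  by move=> le_k; move/(pathP b): pth; apply.
exists (size p).+1, (nth b s), (fun k => r (pt1 (nth b s k)) (pt1 (nth b s k.+1))),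
  (fun k => nth b s k.+1); split=> // [|k le_k].
  by rewrite (last_nth b).
rewrite !valencyE (linked_card2 (lk k le_k)) (linked_card2 (linked_sym (lk k le_k))).
by split=> //; apply: linked_pint_eq1; apply: lk.
Qed.

Lemma sim_connect b c : #|xR b| = 2 -> sim r b c <-> connect link b c.
Proof.
move=> card_b; rewrite /sim card_cprod_trn.
case: (boolP (linked b c)) => [lk|nlk]; first by split=> [_|]; [apply: connect1 | left].
split=> [[//|/bad_pair_connect //]|bc].
by right; apply: connect_bad_pair.
Qed.

Lemma A2E a : A2 r a <-> #|xR a| = 2.
Proof. by rewrite /A2 valencyE. Qed.

Lemma sim_refl b : A2 r b -> sim r b b.
Proof. by move/A2E=> card_b; apply/sim_connect. Qed.

Lemma sim_sym b c : A2 r b -> A2 r c -> sim r b c -> sim r c b.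
Proof.
move=> /A2E card_b /A2E card_c /(sim_connect _ card_b) bc.
by apply/(sim_connect _ card_c); rewrite (sym_connect_sym link_sym).
Qed.

Lemma sim_trans b c e : A2 r b -> A2 r c -> sim r b c -> sim r c e -> sim r b e.
Proof.
move=> /A2E card_b /A2E card_c /(sim_connect _ card_b) bc /(sim_connect _ card_c) ce.
by apply/(sim_connect _ card_b); apply: connect_trans bc ce.
Qed.

Definition cls b := [set c | (#|xR c| == 2) && connect link b c].

Definition classes := [set cls b | b in [set b | #|xR b| == 2]].

Lemma is_classE C : is_class r C <-> C \in classes.
Proof.
split=> [[b [/A2E card_b memC]]|/imsetP [b]].
  apply/imsetP; exists b; first by rewrite inE card_b.
  apply/setP => c; rewrite inE; apply/idP/andP.
    by case/memC => /A2E -> /(sim_connect _ card_b).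
  by case=> /eqP card_c /(sim_connect _ card_b) bc; apply/memC; split; first exact/A2E.
rewrite inE => /eqP card_b ->; exists b; split=> [|c]; first exact/A2E.
rewrite inE; split=> [/andP [/eqP card_c bc]|[/A2E -> /(sim_connect _ card_b) ->]] //.
by split; [apply/A2E | apply/(sim_connect _ card_b)].
Qed.

Lemma mem_cls b c : (c \in cls b) = (#|xR c| == 2) && connect link b c.
Proof. by rewrite inE. Qed.

Lemma cls_in_classes b : #|xR b| = 2 -> cls b \in classes.
Proof. by move=> card_b; apply: imset_f; rewrite inE card_b. Qed.

Lemma mem_cls_self b : #|xR b| = 2 -> b \in cls b.
Proof. by move=> card_b; rewrite mem_cls card_b connect0. Qed.

Section Classes.
Variable C : {set 'I_d.+1}.
Hypothesis C_class : C \in classes.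

Lemma classes_card2 l : l \in C -> #|xR l| = 2.
Proof. by case/imsetP: C_class => b _ ->; rewrite mem_cls => /andP [/eqP]. Qed.

Lemma classes_connect i l : i \in C -> l \in C -> connect link l i.
Proof.
case/imsetP: C_class => b _ ->; rewrite !mem_cls => /andP [_ bi] /andP [_ bl].
by apply: connect_trans bi; rewrite (sym_connect_sym link_sym).
Qed.

Lemma classes_link_closed m l : linked m l -> l \in C -> m \in C.
Proof.
move=> lk; case/imsetP: C_class => b _ ->; rewrite !mem_cls => /andP [_ bl].
rewrite (linked_card2 (linked_sym lk)) eqxx; apply: connect_trans bl _.
by apply: connect1; apply: linked_sym.
Qed.

Lemma classes_disjoint C' l : C' \in classes -> l \in C -> l \in C' -> C = C'.
Proof.
move=> C'_class lC lC'; case/imsetP: C_class lC => b _ ->.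
case/imsetP: C'_class lC' => b' _ ->; rewrite !mem_cls => /andP [_ b'l] /andP [_ bl].
have sym := sym_connect_sym link_sym.
apply/setP => c; rewrite !mem_cls; congr (_ && _); apply/idP/idP => [bc|b'c].
  by apply: connect_trans b'l _; apply: connect_trans bc; rewrite sym.
by apply: connect_trans bl _; apply: connect_trans b'c; rewrite sym.
Qed.

End Classes.

(** * Invariant subspaces of the standard module *)

Section StandardModule.
Variable F : fieldType.
Local Open Scope ring_scope.

Local Notation n := #|X|.
Local Notation A_ a := (@adjmx F X d r a).
Local Notation E_ a := (@dualidm F X d r x a).
Local Notation T := (@terw F X d r x).

Definition ev (v : 'cV[F]_n) (y : X) : F := v (enum_rank y) 0.

Definition vec_of (f : X -> F) : 'cV[F]_n := \col_k f (enum_val k).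

Lemma ev_vec_of f y : ev (vec_of f) y = f y.
Proof. by rewrite /ev /vec_of mxE enum_rankK. Qed.

Lemma vecP (u v : 'cV[F]_n) : (forall y, ev u y = ev v y) -> u = v.
Proof.
move=> eq_uv; apply/matrixP => i j; rewrite (ord1 j).
by move: (eq_uv (enum_val i)); rewrite /ev enum_valK.
Qed.

Lemma evD u v y : ev (u + v) y = ev u y + ev v y.
Proof. by rewrite /ev mxE. Qed.

Lemma evZ c v y : ev (c *: v) y = c * ev v y.
Proof. by rewrite /ev mxE. Qed.

Lemma evN v y : ev (- v) y = - ev v y.
Proof. by rewrite /ev mxE. Qed.

Lemma ev0 y : ev 0 y = 0.
Proof. by rewrite /ev mxE. Qed.

Lemma ev_sum I (s : seq I) (P : pred I) (G : I -> 'cV[F]_n) y :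
  ev (\sum_(i <- s | P i) G i) y = \sum_(i <- s | P i) ev (G i) y.
Proof. by rewrite /ev summxE. Qed.

Lemma ev_mul (M : 'M[F]_n) v y :
  ev (M *m v) y = \sum_z M (enum_rank y) (enum_rank z) * ev v z.
Proof.
rewrite /ev mxE (reindex enum_rank) //.
by exists enum_val => k _; [exact: enum_rankK | exact: enum_valK].
Qed.

Lemma ev_adj a v y : ev (A_ a *m v) y = \sum_z (r y z == a)%:R * ev v z.
Proof. by rewrite ev_mul; apply: eq_bigr => z _; rewrite /adjmx mxE !enum_rankK. Qed.

Lemma sum_delta (f : X -> F) p : \sum_z (z == p)%:R * f z = f p.
Proof. by rewrite (bigD1 p) //= eqxx mul1r big1 ?addr0 // => z /negbTE ->; rewrite mul0r. Qed.

Lemma ev_dual a v y : ev (E_ a *m v) y = (r x y == a)%:R * ev v y.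
Proof.
rewrite ev_mul -(sum_delta (fun z => (r x y == a)%:R * ev v z) y).
apply: eq_bigr => z _; rewrite /dualidm mxE enum_rankK (inj_eq enum_rank_inj) eq_sym.
by case: (z == y); rewrite ?mul0r ?mulr1 ?mul1r.
Qed.

Lemma sum_by_xR (f : X -> F) : \sum_z f z = \sum_l \sum_(z in xR l) f z.
Proof.
rewrite (partition_big (r x) predT) //=; apply: eq_bigr => l _.
by apply: eq_bigl => z; rewrite xRP.
Qed.

Lemma sum_xR (f : X -> F) l : \sum_z (r x z == l)%:R * f z = \sum_(z in xR l) f z.
Proof.
rewrite [RHS]big_mkcond /=; apply: eq_bigr => z _; rewrite xRP.
by case: (_ == l); rewrite ?mul1r ?mul0r.
Qed.

Lemma sum_nat_card (B : {set X}) (P : pred X) :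
  \sum_(z in B) (P z)%:R = #|[set z in B | P z]|%:R :> F.
Proof.
rewrite -sum1_card natr_sum [LHS]big_mkcond [RHS]big_mkcond /=.
by apply: eq_bigr => z _; rewrite !inE; case: (z \in B); case: (P z).
Qed.

Lemma sum_xR2 (f : X -> F) m : #|xR m| = 2%N ->
  \sum_(y in xR m) f y = f (pt1 m) + f (pt2 m).
Proof.
move=> card_m; rewrite (xR2E card_m) big_setU1 ?big_set1 //.
by rewrite inE eq_sym pt2_neq.
Qed.

Definition invariant (P : 'cV[F]_n -> Prop) (M : 'M[F]_n) := forall v, P v -> P (M *m v).

Lemma terw_invariant (P : 'cV[F]_n -> Prop) :
  (forall u v, P u -> P v -> P (u + v)) -> (forall c v, P v -> P (c *: v)) ->
  (forall a, invariant P (A_ a)) -> (forall a, invariant P (E_ a)) ->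
  forall M, T M -> invariant P M.
Proof.
move=> PD PZ PA PE M.
elim=> [N [a [->|->]] //|v|M1 M2 _ IH1 _ IH2 v|c N _ IH v|M1 M2 _ IH1 _ IH2 v].
- by rewrite mul1mx.
- by move=> Pv; rewrite mulmxDl; apply: PD; [apply: IH1 | apply: IH2].
- by move=> Pv; rewrite -scalemxAl; apply/PZ/IH.
- by move=> Pv; rewrite -mulmxA; apply/IH1/IH2.
Qed.

Definition xconst (v : 'cV[F]_n) := forall y y', r x y = r x y' -> ev v y = ev v y'.

Definition xsum0 (v : 'cV[F]_n) := forall a, \sum_(y in xR a) ev v y = 0.

Definition xsum0_on (S : {set 'I_d.+1}) (v : 'cV[F]_n) :=
  xsum0 v /\ forall y, r x y \notin S -> ev v y = 0.

Definition link_closed (S : {set 'I_d.+1}) := forall m l, linked m l -> l \in S -> m \in S.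

Lemma ev_adj_xconst a v y : xconst v ->
  ev (A_ a *m v) y = \sum_l #|[set z in xR l | r y z == a]|%:R * ev v (pt1 l).
Proof.
move=> v_const; rewrite ev_adj sum_by_xR; apply: eq_bigr => l _.
rewrite -sum_nat_card mulr_suml; apply: eq_bigr => z zl; congr (_ * _).
by apply: v_const; rewrite pt1P (xR_rel zl).
Qed.

Lemma adj_xconst a : invariant xconst (A_ a).
Proof.
move=> v v_const y y' Eyy'; rewrite !ev_adj_xconst //; apply: eq_bigr => l _.
by rewrite (card_row_fibre _ _ Eyy').
Qed.

Lemma dual_xconst a : invariant xconst (E_ a).
Proof. by move=> v v_const y y' Eyy'; rewrite !ev_dual Eyy' (v_const _ _ Eyy'). Qed.

Lemma terw_xconst M : T M -> invariant xconst M.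
Proof.
apply: terw_invariant; [| |exact: adj_xconst|exact: dual_xconst].
- by move=> u v uc vc y y' E; rewrite !evD (uc _ _ E) (vc _ _ E).
- by move=> c v vc y y' E; rewrite !evZ (vc _ _ E).
Qed.

Lemma adj_xsum0 a : invariant xsum0 (A_ a).
Proof.
move=> v v_sum0 m; under eq_bigr do rewrite ev_adj.
rewrite exchange_big sum_by_xR big1 // => l _.
have fibre z : z \in xR l ->
    \sum_(y in xR m) (r y z == a)%:R = #|[set y in xR m | r y (pt1 l) == a]|%:R :> F.
  by move=> zl; rewrite sum_nat_card (card_col_fibre _ _ (z' := pt1 l)) // pt1P (xR_rel zl).
under eq_bigr => z zl do rewrite -mulr_suml fibre //.
by rewrite -mulr_sumr v_sum0 mulr0.
Qed.

Lemma adj_xsum0_on S a : link_closed S -> invariant (xsum0_on S) (A_ a).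
Proof.
move=> S_closed v [v_sum0 v_supp]; split=> [|y yS]; first exact: adj_xsum0.
rewrite ev_adj sum_by_xR big1 // => l _.
case: (boolP (l \in S)) => lS; last first.
  by rewrite big1 // => z zl; rewrite v_supp ?mulr0 // (xR_rel zl).
have const z : z \in xR l -> r y z = r y (pt1 l).
  move=> zl; apply/eqP; apply: contraNT yS => neq; apply: S_closed lS.
  by apply/exists_inP; exists y; rewrite ?xRP //; apply/exists_inP; exists z => //;
    apply/exists_inP; exists (pt1 l); rewrite ?pt1_in.
under eq_bigr => z zl do rewrite const //.
by rewrite -mulr_sumr v_sum0 mulr0.
Qed.

Lemma dual_xsum0 a : invariant xsum0 (E_ a).
Proof.
move=> v v_sum0 m; under eq_bigr => y ym do rewrite ev_dual (xR_rel ym).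
by rewrite -mulr_sumr v_sum0 mulr0.
Qed.

Lemma dual_xsum0_on S a : invariant (xsum0_on S) (E_ a).
Proof.
move=> v [v_sum0 v_supp]; split=> [|y yS]; first exact: dual_xsum0.
by rewrite ev_dual v_supp ?mulr0.
Qed.

Lemma terw_xsum0_on S M : link_closed S -> T M -> invariant (xsum0_on S) M.
Proof.
move=> S_closed; apply: terw_invariant => [||a|]; last exact: dual_xsum0_on.
- move=> u v [u0 us] [v0 vs]; split=> [a|y yS]; last by rewrite evD us ?vs ?addr0.
  by under eq_bigr do rewrite evD; rewrite big_split /= u0 v0 addr0.
- move=> c v [v0 vs]; split=> [a|y yS]; last by rewrite evZ vs ?mulr0.
  by under eq_bigr do rewrite evZ; rewrite -mulr_sumr v0 mulr0.
- exact: adj_xsum0_on.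
Qed.

Definition charv l := vec_of (fun y => (r x y == l)%:R).

Definition diffv l := vec_of (fun y => (y == pt1 l)%:R - (y == pt2 l)%:R).

Lemma charv_xconst l : xconst (charv l).
Proof. by move=> y y' Eyy'; rewrite !ev_vec_of Eyy'. Qed.

Lemma ev_charv_pt1 i l : ev (charv l) (pt1 i) = (i == l)%:R.
Proof. by rewrite ev_vec_of pt1P. Qed.

Section DiffVector.
Variable l : 'I_d.+1.
Hypothesis card_l : #|xR l| = 2%N.

Lemma ev_diffv_off y : r x y != l -> ev (diffv l) y = 0.
Proof.
move=> yl; rewrite ev_vec_of; have [y1 y2] : y != pt1 l /\ y != pt2 l.
  by split; apply: contraNneq yl => ->; rewrite ?pt1P ?pt2P.
by rewrite (negbTE y1) (negbTE y2) subrr.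
Qed.

Lemma ev_diffv_pt1 i : ev (diffv l) (pt1 i) = (i == l)%:R.
Proof.
have [->|il] := eqVneq i l; last by rewrite ev_diffv_off // pt1P.
by rewrite ev_vec_of eqxx eq_sym (negbTE (pt2_neq card_l)) subr0.
Qed.

Lemma ev_diffv_pt2 : ev (diffv l) (pt2 l) = -1.
Proof. by rewrite ev_vec_of (negbTE (pt2_neq card_l)) eqxx sub0r. Qed.

Lemma diffv_xsum0_on (S : {set 'I_d.+1}) : l \in S -> xsum0_on S (diffv l).
Proof.
move=> lS; split=> [a|y yS]; last by rewrite ev_diffv_off //; apply: contraNneq yS => ->.
have [->|al] := eqVneq a l; first by rewrite sum_xR2 // ev_diffv_pt1 eqxx ev_diffv_pt2 subrr.
by rewrite big1 // => y ya; rewrite ev_diffv_off // (xR_rel ya).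
Qed.

End DiffVector.

Lemma xconst_decomp v : xconst v -> v = \sum_l ev v (pt1 l) *: charv l.
Proof.
move=> v_const; apply: vecP => y; rewrite ev_sum (bigD1 (r x y)) //= big1.
  by rewrite evZ ev_vec_of eqxx mulr1 addr0; apply: v_const; rewrite pt1P.
by move=> l yl; rewrite evZ ev_vec_of eq_sym (negbTE yl) mulr0.
Qed.

Lemma xsum0_on_decomp (S : {set 'I_d.+1}) v : {in S, forall l, #|xR l| = 2%N} -> xsum0_on S v ->
  v = \sum_(l in S) ev v (pt1 l) *: diffv l.
Proof.
move=> S2 [v_sum0 v_supp]; apply: vecP => y; rewrite ev_sum.
have off l : l \in S -> l != r x y -> ev (ev v (pt1 l) *: diffv l) y = 0.
  by move=> lS ly; rewrite evZ ev_diffv_off ?S2 ?mulr0 // eq_sym.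
have [yS|yS] := boolP (r x y \in S); last first.
  by rewrite v_supp // big1 // => l lS; apply: off => //; apply: contraNneq yS => <-.
rewrite (bigD1 (r x y)) //= big1 ?addr0 => [|l /andP []]; last exact: off.
move: yS; move Em: (r x y) => m mS; have card_m := S2 _ mS.
have : y \in [set pt1 m; pt2 m] by rewrite -xR2E // xRP Em.
rewrite evZ !inE => /orP [] /eqP ->; first by rewrite ev_diffv_pt1 // eqxx mulr1.
have := v_sum0 m; rewrite sum_xR2 // ev_diffv_pt2 // mulrN1 => /eqP.
by rewrite addrC addr_eq0 => /eqP.
Qed.

Definition prim_rep (M : 'M[F]_n) : 'M[F]_d.+1 :=
  \matrix_(i, l) ev (M *m charv l) (pt1 i).

Definition class_rep (C : {set 'I_d.+1}) (M : 'M[F]_n) : 'M[F]_#|C| :=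
  \matrix_(s, t) ev (M *m diffv (enum_val t)) (pt1 (enum_val s)).

Fact prim_rep_is_linear : linear prim_rep.
Proof. by move=> c M N; apply/matrixP => i l; rewrite !mxE mulmxDl -scalemxAl evD evZ. Qed.

HB.instance Definition _ :=
  GRing.isSemilinear.Build F 'M[F]_n 'M[F]_d.+1 _ prim_rep
    (GRing.semilinear_linear prim_rep_is_linear).

Fact class_rep_is_linear (C : {set 'I_d.+1}) : linear (class_rep C).
Proof. by move=> c M N; apply/matrixP => s t; rewrite !mxE mulmxDl -scalemxAl evD evZ. Qed.

HB.instance Definition _ (C : {set 'I_d.+1}) :=
  GRing.isSemilinear.Build F 'M[F]_n 'M[F]_#|C| _ (class_rep C)
    (GRing.semilinear_linear (class_rep_is_linear C)).

Lemma prim_rep1 : prim_rep 1%:M = 1%:M.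
Proof. by apply/matrixP => i l; rewrite !mxE mul1mx ev_charv_pt1. Qed.

Lemma prim_repM (M N : 'M[F]_n) :
  invariant xconst N -> prim_rep (M *m N) = prim_rep M *m prim_rep N.
Proof.
move=> N_const; apply/matrixP => i l; rewrite !mxE -mulmxA.
rewrite {1}(xconst_decomp (N_const _ (charv_xconst l))) mulmx_sumr ev_sum.
by apply: eq_bigr => m _; rewrite -scalemxAr evZ !mxE mulrC.
Qed.

Section ClassRep.
Variable C : {set 'I_d.+1}.
Hypothesis C2 : {in C, forall l, #|xR l| = 2%N}.

Lemma class_rep1 : class_rep C 1%:M = 1%:M.
Proof.
apply/matrixP => s t; rewrite !mxE mul1mx ev_diffv_pt1 ?C2 ?enum_valP //.
by rewrite (inj_eq enum_val_inj).
Qed.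

Lemma class_repM (M N : 'M[F]_n) : invariant (xsum0_on C) N ->
  class_rep C (M *m N) = class_rep C M *m class_rep C N.
Proof.
move=> N_xsum0_on; apply/matrixP => s t; rewrite !mxE -mulmxA.
have Nt : xsum0_on C (N *m diffv (enum_val t)).
  by apply/N_xsum0_on/diffv_xsum0_on; rewrite ?C2 ?enum_valP.
rewrite {1}(xsum0_on_decomp C2 Nt) mulmx_sumr ev_sum big_enum_val /=.
by apply: eq_bigr => u _; rewrite -scalemxAr evZ !mxE mulrC.
Qed.

End ClassRep.

Lemma prim_rep_alg_hom : alg_hom_on T prim_rep.
Proof.
split=> [|A B _ _|c A _|A B _ TB]; rewrite ?linearD ?linearZ //; first exact: prim_rep1.
by apply/prim_repM/terw_xconst.
Qed.

Lemma class_rep_alg_hom C : C \in classes -> alg_hom_on T (class_rep C).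
Proof.
move=> C_class; have C2 := classes_card2 C_class.
split=> [|A B _ _|c A _|A B _ TB]; rewrite ?linearD ?linearZ //; first exact: class_rep1.
by apply/class_repM/terw_xsum0_on => // m l; apply: classes_link_closed.
Qed.

Definition unitv y := vec_of (fun z => (z == y)%:R).

Lemma mx_unitvP (M N : 'M[F]_n) : (forall y, M *m unitv y = N *m unitv y) -> M = N.
Proof.
have ev_unitv (K : 'M[F]_n) y z : ev (K *m unitv y) z = K (enum_rank z) (enum_rank y).
  rewrite ev_mul -[RHS](sum_delta (fun u => K (enum_rank z) (enum_rank u))).
  by apply: eq_bigr => u _; rewrite ev_vec_of mulrC.
move=> eqMN; apply/matrixP => i j.
by have := congr1 (ev^~ (enum_val i)) (eqMN (enum_val j)); rewrite /= !ev_unitv !enum_valK.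
Qed.

Lemma unitv_card1 y : #|xR (r x y)| = 1%N -> unitv y = charv (r x y).
Proof.
move=> card1; apply: vecP => z; rewrite !ev_vec_of.
have /cards1P [u xRy] : #|xR (r x y)| == 1%N by rewrite card1.
suff -> : (z == y) = (r x z == r x y) by [].
apply/eqP/eqP => [-> //|Ezy].
have : z \in xR (r x y) by rewrite xRP Ezy.
have : y \in xR (r x y) by rewrite xRP.
by rewrite xRy !inE => /eqP-> /eqP->.
Qed.

Lemma unitv_card2 y (m := r x y) : #|xR m| = 2%N ->
  2%:R *: unitv y = charv m + ev (diffv m) y *: diffv m.
Proof.
move=> card_m; apply: vecP => z; rewrite evD !evZ !ev_vec_of.
have : y \in [set pt1 m; pt2 m] by rewrite -xR2E // xRP.
have npt := negbTE (pt2_neq card_m); have tpn : (pt1 m == pt2 m) = false by rewrite eq_sym.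
have [zm|zm] := eqVneq (r x z) m; last first.
  have [z1 z2] : z != pt1 m /\ z != pt2 m.
    by split; apply: contraNneq zm => ->; rewrite ?pt1P ?pt2P.
  have zy : (z == y) = false by apply: contraNF zm => /eqP ->.
  by rewrite zy (negbTE z1) (negbTE z2) subrr !mulr0 addr0.
have : z \in [set pt1 m; pt2 m] by rewrite -xR2E // xRP zm.
by rewrite !inE => /orP [] /eqP -> /orP [] /eqP ->;
  rewrite ?pt1P ?pt2P // ?eqxx ?npt ?tpn /=; ring.
Qed.

(** * Faithfulness and matrix units *)

Section TwoInvertible.
Hypothesis two_neq0 : 2%:R != 0 :> F.

Lemma mx_charv_diffvP (M N : 'M[F]_n) : (forall l, M *m charv l = N *m charv l) ->
  (forall l, #|xR l| = 2%N -> M *m diffv l = N *m diffv l) -> M = N.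
Proof.
move=> eq_charv eq_diffv; apply: mx_unitvP => y.
have := xR_card_le2 (r x y); have := xR_card_gt0 (r x y).
case card_y: #|xR (r x y)| => [|[|[|k]]] // _ _; first by rewrite unitv_card1.
apply: (scalerI two_neq0); rewrite !scalemxAr unitv_card2 //.
by rewrite !mulmxDr -!scalemxAr eq_charv eq_diffv.
Qed.

Lemma terw_rep_inj (A B : 'M[F]_n) : T A -> T B -> prim_rep A = prim_rep B ->
  (forall C, C \in classes -> class_rep C A = class_rep C B) -> A = B.
Proof.
move=> TA TB eq_prim eq_class; apply: mx_charv_diffvP => [l|l card_l].
  rewrite (xconst_decomp (terw_xconst TA (charv_xconst l))).
  rewrite (xconst_decomp (terw_xconst TB (charv_xconst l))).
  apply: eq_bigr => i _; congr (_ *: _).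
  by have := congr1 (fun K : 'M[F]_d.+1 => K i l) eq_prim; rewrite !mxE.
have C_class := cls_in_classes card_l; have lC := mem_cls_self card_l.
have C2 := classes_card2 C_class.
have C_closed : link_closed (cls l) by move=> m l'; apply: classes_link_closed.
have wA := terw_xsum0_on C_closed TA (diffv_xsum0_on card_l lC).
have wB := terw_xsum0_on C_closed TB (diffv_xsum0_on card_l lC).
rewrite (xsum0_on_decomp C2 wA) (xsum0_on_decomp C2 wB); apply: eq_bigr => m mC; congr (_ *: _).
have := congr1 (fun K : 'M[F]_#|cls l| => K (enum_rank_in lC m) (enum_rank_in lC l))
  (eq_class _ C_class).
by rewrite !mxE !(enum_rankK_in lC).
Qed.

Lemma terw_sum I (s : seq I) (P : pred I) (G : I -> 'M[F]_n) :
  (forall i, P i -> T (G i)) -> T (\sum_(i <- s | P i) G i).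
Proof.
move=> TG; apply: big_ind => //; last exact: ga_add.
by rewrite -(scale0r 1%:M); apply/ga_scale/ga_one.
Qed.

Definition Jmx : 'M[F]_n := \sum_a A_ a.

Lemma ev_Jmx v y : ev (Jmx *m v) y = \sum_z ev v z.
Proof.
rewrite mulmx_suml ev_sum; under eq_bigr do rewrite ev_adj.
rewrite exchange_big; apply: eq_bigr => z _; rewrite -mulr_suml.
by rewrite (bigD1 (r y z)) //= eqxx big1 ?addr0 ?mul1r // => a; rewrite eq_sym => /negbTE ->.
Qed.

Lemma card_xR_neq0 l : #|xR l|%:R != 0 :> F.
Proof.
have := xR_card_le2 l; have := xR_card_gt0 l.
by case: #|xR l| => [|[|[|k]]] //; rewrite oner_neq0.
Qed.

Definition prim_unit i l : 'M[F]_n := (#|xR l|%:R)^-1 *: (E_ i *m Jmx *m E_ l).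

Lemma terw_prim_unit i l : T (prim_unit i l).
Proof.
apply/ga_scale/ga_mul; last by apply: ga_gen; exists l; right.
apply: ga_mul; first by apply: ga_gen; exists i; right.
by apply: terw_sum => a _; apply: ga_gen; exists a; left.
Qed.

Lemma ev_prim_unit i l v y : ev (prim_unit i l *m v) y =
  (#|xR l|%:R)^-1 * ((r x y == i)%:R * \sum_(z in xR l) ev v z).
Proof.
rewrite -scalemxAl evZ -!mulmxA ev_dual ev_Jmx.
by under eq_bigr do rewrite ev_dual; rewrite sum_xR.
Qed.

Lemma prim_unit_charv i l m : prim_unit i l *m charv m = (m == l)%:R *: charv i.
Proof.
apply: vecP => y; rewrite ev_prim_unit evZ ev_vec_of.
under eq_bigr => z zl do rewrite ev_vec_of (xR_rel zl).
rewrite sumr_const -[(l == m)%:R *+ _]mulr_natr mulrCA [_ * #|xR l|%:R]mulrC.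
rewrite mulKf ?card_xR_neq0 //.
by rewrite mulrC eq_sym.
Qed.

Lemma prim_unit_xsum0 i l v : xsum0 v -> prim_unit i l *m v = 0.
Proof. by move=> v_sum0; apply: vecP => y; rewrite ev_prim_unit v_sum0 ev0 !mulr0. Qed.

Definition diff_proj l : 'M[F]_n := E_ l - prim_unit l l.

Lemma diff_proj_charv l m : diff_proj l *m charv m = 0.
Proof.
rewrite mulmxBl prim_unit_charv; apply: vecP => y.
rewrite evD evN evZ ev_dual !ev_vec_of ev0.
have [->|yl] := eqVneq (r x y) l; last by rewrite mul0r mulr0 subrr.
by rewrite mul1r mulr1 eq_sym subrr.
Qed.

Lemma diff_proj_diffv l m : #|xR m| = 2%N -> diff_proj l *m diffv m = (m == l)%:R *: diffv m.
Proof.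
move=> card_m; rewrite mulmxBl prim_unit_xsum0 ?subr0; last first.
  by case: (diffv_xsum0_on card_m (in_setT m)).
apply: vecP => y; rewrite evZ ev_dual.
have [->|ym] := eqVneq (r x y) m; first by rewrite eq_sym.
by rewrite ev_diffv_off // !mulr0.
Qed.

Definition class_unit M i l := [/\ T M, forall m, M *m charv m = 0 &
  forall m, #|xR m| = 2%N -> M *m diffv m = (m == l)%:R *: diffv i].

Lemma class_unit_diff_proj l : class_unit (diff_proj l) l l.
Proof.
split=> [||m card_m].
3: by rewrite diff_proj_diffv //; case: eqVneq => [->|_]; rewrite ?scale0r.
- rewrite /diff_proj -scaleN1r; apply/ga_add/ga_scale/terw_prim_unit.
  by apply: ga_gen; exists l; right.
- exact: diff_proj_charv.
Qed.

Lemma adj_diffv_linked i l : linked i l ->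
  E_ i *m (A_ (r (pt1 i) (pt1 l)) *m diffv l) = diffv i.
Proof.
move=> lk; have card_i := linked_card2 (linked_sym lk); have card_l := linked_card2 lk.
set u := E_ i *m _.
have u_xsum0_on : xsum0_on [set i] u.
  split=> [|y]; first by apply/dual_xsum0/adj_xsum0; case: (diffv_xsum0_on card_l (in_setT l)).
  by rewrite inE => yi; rewrite ev_dual (negbTE yi) mul0r.
rewrite (xsum0_on_decomp _ u_xsum0_on) => [|l']; last by rewrite inE => /eqP ->.
rewrite big_set1 ev_dual pt1P eqxx mul1r ev_adj.
under eq_bigr => z _ do rewrite ev_vec_of mulrBr ![(r _ z == _)%:R * _]mulrC.
rewrite sumrB !sum_delta eqxx [_ == _](negbTE _) ?subr0 ?scale1r //.
rewrite eq_sym; apply: linked_row lk (pt1_in i) (pt1_in l) (pt2_in card_l) _.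
by rewrite eq_sym pt2_neq.
Qed.

Lemma class_unit_linked i l : linked i l ->
  class_unit (E_ i *m A_ (r (pt1 i) (pt1 l)) *m diff_proj l) i l.
Proof.
move=> lk; have [T_proj proj_charv proj_diffv] := class_unit_diff_proj l.
split=> [||m card_m].
- apply: ga_mul T_proj; apply: ga_mul; apply: ga_gen; first by exists i; right.
  by exists (r (pt1 i) (pt1 l)); left.
- by move=> m; rewrite -mulmxA proj_charv mulmx0.
by rewrite -mulmxA proj_diffv // -scalemxAr -mulmxA adj_diffv_linked.
Qed.

Lemma class_unit_mul M N i m l : #|xR m| = 2%N ->
  class_unit M i m -> class_unit N m l -> class_unit (M *m N) i l.
Proof.
move=> card_m [TM M_charv M_diffv] [TN N_charv N_diffv]; split=> [||m' card_m'].
- exact: ga_mul.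
- by move=> m'; rewrite -mulmxA N_charv mulmx0.
by rewrite -mulmxA N_diffv // -scalemxAr M_diffv // eqxx scale1r.
Qed.

Lemma class_unit_connect i l : #|xR l| = 2%N -> connect link l i -> exists M, class_unit M i l.
Proof.
move=> card_l /connectP [p]; elim: p l card_l => [|v p IH] l card_l /=.
  by move=> _ ->; exists (diff_proj l); apply: class_unit_diff_proj.
case/andP => lv pth last_i; have card_v := linked_card2 lv.
have [M M_unit] := IH v card_v pth last_i.
by exists (M *m (E_ v *m A_ (r (pt1 v) (pt1 l)) *m diff_proj l));
  apply: class_unit_mul M_unit (class_unit_linked (linked_sym lv)).
Qed.

Lemma prim_rep_prim_unit i l : prim_rep (prim_unit i l) = delta_mx i l.
Proof.
apply/matrixP => i' l'; rewrite !mxE prim_unit_charv evZ ev_charv_pt1.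
by case: (l' == l); case: (i' == i); rewrite ?mulr1 ?mulr0.
Qed.

Lemma class_rep_prim_unit (C : {set 'I_d.+1}) i l : {in C, forall m, #|xR m| = 2%N} ->
  class_rep C (prim_unit i l) = 0.
Proof.
move=> C2; apply/matrixP => s t; rewrite !mxE prim_unit_xsum0 ?ev0 //.
by case: (diffv_xsum0_on (C2 _ (enum_valP t)) (in_setT (enum_val t))).
Qed.

Lemma prim_rep_class_unit M i l : class_unit M i l -> prim_rep M = 0.
Proof. by case=> _ M_charv _; apply/matrixP => i' l'; rewrite !mxE M_charv ev0. Qed.

Lemma class_rep_class_unit (C : {set 'I_d.+1}) M i l :
  {in C, forall m, #|xR m| = 2%N} -> #|xR i| = 2%N -> class_unit M i l ->
  class_rep C M = \matrix_(s, t) ((enum_val s == i) && (enum_val t == l))%:R.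
Proof.
move=> C2 card_i [_ _ M_diffv]; apply/matrixP => s t.
rewrite !mxE M_diffv ?C2 ?enum_valP // evZ ev_diffv_pt1 //.
by case: (_ == l); case: (_ == i); rewrite ?mulr1 ?mulr0.
Qed.

Lemma class_rep_class_unit_same (C : {set 'I_d.+1}) (s t : 'I_#|C|) M : C \in classes ->
  class_unit M (enum_val s) (enum_val t) -> class_rep C M = delta_mx s t.
Proof.
move=> C_class M_unit; have C2 := classes_card2 C_class.
rewrite (class_rep_class_unit C2 (C2 _ (enum_valP s)) M_unit).
by apply/matrixP => s' t'; rewrite !mxE !(inj_eq enum_val_inj).
Qed.

Lemma class_rep_class_unit_other (C C' : {set 'I_d.+1}) (s t : 'I_#|C'|) M :
  C \in classes -> C' \in classes ->
  C' != C -> class_unit M (enum_val s) (enum_val t) -> class_rep C M = 0.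
Proof.
move=> C_class C'_class neqC M_unit; have C2 := classes_card2 C_class.
rewrite (class_rep_class_unit C2 (classes_card2 C'_class (enum_valP s)) M_unit).
apply/matrixP => s' t'; rewrite !mxE.
have [Et|] := eqVneq (enum_val t') (enum_val t); last by rewrite andbF.
case/eqP: neqC; apply: (classes_disjoint C'_class C_class (enum_valP t)).
by rewrite -Et enum_valP.
Qed.

Lemma class_units : exists W : 'I_d.+1 -> 'I_d.+1 -> 'M[F]_n,
  forall C, C \in classes -> {in C &, forall i l, class_unit (W i l) i l}.
Proof.
pose unit_for (il : 'I_d.+1 * 'I_d.+1) M :=
  (#|xR il.2| == 2%N) && connect link il.2 il.1 -> class_unit M il.1 il.2.
have [W W_unit] : exists W, forall il, unit_for il (W il).
  apply: (@fin_all_exists _ (fun=> 'M[F]_n)) => -[i l]; rewrite /unit_for /=.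
  case: (boolP (_ && _)); last by exists 0.
  by case/andP => /eqP card_l /(class_unit_connect card_l) [M M_unit]; exists M.
exists (fun i l => W (i, l)) => C C_class i l iC lC; apply: W_unit => /=.
by rewrite (classes_card2 C_class lC) eqxx (classes_connect C_class).
Qed.

Lemma terw_rep_surj (B0 : 'M[F]_d.+1) (B : forall C : {set 'I_d.+1}, 'M[F]_#|C|) :
  exists A, [/\ T A, prim_rep A = B0 & forall C, C \in classes -> class_rep C A = B C].
Proof.
have [W W_unit] := class_units.
have WC_unit (C : {set 'I_d.+1}) (s t : 'I_#|C|) : C \in classes ->
    class_unit (W (enum_val s) (enum_val t)) (enum_val s) (enum_val t).
  by move=> C_class; apply: (W_unit C C_class); apply: enum_valP.
exists (\sum_i \sum_l B0 i l *: prim_unit i l +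
        \sum_(C in classes) \sum_s \sum_t B C s t *: W (enum_val s) (enum_val t)).
split=> [|| C C_class].
- apply: ga_add.
    by apply: terw_sum => i _; apply: terw_sum => l _; apply/ga_scale/terw_prim_unit.
  apply: terw_sum => C C_class; apply: terw_sum => s _; apply: terw_sum => t _.
  by apply: ga_scale; case: (WC_unit C s t C_class).
- rewrite linearD !linear_sum [X in _ + X]big1 ?addr0 => [|C C_class].
    rewrite [RHS]matrix_sum_delta; apply: eq_bigr => i _; rewrite linear_sum.
    by apply: eq_bigr => l _; rewrite linearZ /= prim_rep_prim_unit.
  rewrite linear_sum big1 // => s _; rewrite linear_sum big1 // => t _.
  by rewrite linearZ /= (prim_rep_class_unit (WC_unit C s t C_class)) scaler0.
rewrite linearD !linear_sum big1 ?add0r => [|i _]; last first.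
  rewrite linear_sum big1 // => l _.
  by rewrite linearZ /= class_rep_prim_unit ?scaler0 //; apply: classes_card2.
rewrite (bigD1 C) //= [X in _ + X]big1 ?addr0 => [|C' /andP [C'_class neqC]].
  rewrite [RHS]matrix_sum_delta linear_sum; apply: eq_bigr => s _.
  rewrite linear_sum; apply: eq_bigr => t _.
  by rewrite linearZ /= (class_rep_class_unit_same C_class (WC_unit C s t C_class)).
rewrite linear_sum big1 // => s _; rewrite linear_sum big1 // => t _.
rewrite linearZ /= (class_rep_class_unit_other C_class C'_class neqC (WC_unit C' s t C'_class)).
by rewrite scaler0.
Qed.

End TwoInvertible.

End StandardModule.

End QuasiThinScheme.

Local Open Scope ring_scope.

Theorem corollary7p16 (F : closedFieldType) (X : finType) (d : nat)
  (r : X -> X -> 'I_d.+1) (x : X) :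
  (2 \notin [pchar F])%N ->
  is_scheme r -> quasi_thin r -> (exists a, A2 r a) ->
  (* ~ is an equivalence relation on A2 *)
  ((forall b, A2 r b -> sim r b b) /\
   (forall b c, A2 r b -> A2 r c -> sim r b c -> sim r c b) /\
   (forall b c e, A2 r b -> A2 r c -> A2 r e -> sim r b c -> sim r c e -> sim r b e)) /\
  (* T(x) is isomorphic to M_{d+1}(F) (+) the direct sum over the classes C of M_{|C|}(F) *)
  exists (phi0 : 'M[F]_#|X| -> 'M[F]_d.+1)
         (phi : forall C : {set 'I_d.+1}, 'M[F]_#|X| -> 'M[F]_#|C|),
    [/\ alg_hom_on (@terw F _ _ r x) phi0,
        (forall C, is_class r C -> alg_hom_on (@terw F _ _ r x) (phi C)),
        (forall A B, @terw F _ _ r x A -> @terw F _ _ r x B ->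
           phi0 A = phi0 B -> (forall C, is_class r C -> phi C A = phi C B) -> A = B)
      & (forall (B0 : 'M[F]_d.+1) (B : forall C : {set 'I_d.+1}, 'M[F]_#|C|),
           exists A, [/\ @terw F _ _ r x A, phi0 A = B0 &
                         forall C, is_class r C -> phi C A = B C])].
Proof.
move=> char_F scheme_r qt_r _.
have two_neq0 : 2%:R != 0 :> F by move: char_F; rewrite inE.
have classE C := is_classE scheme_r x qt_r C.
split.
  split; first exact: sim_refl.
  split=> [b c|b c e Ab Ac _]; first exact: sim_sym.
  exact: sim_trans.
exists (@prim_rep _ _ r x F), (@class_rep _ _ r x F); split.
- exact: prim_rep_alg_hom.
- by move=> C /classE; apply: class_rep_alg_hom.
- move=> A B TA TB eq_prim eq_class; apply: terw_rep_inj TA TB eq_prim _ => //.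
  by move=> C /classE; apply: eq_class.
- move=> B0 B; have [A [TA eq_prim eq_class]] := terw_rep_surj scheme_r x qt_r two_neq0 B0 B.
  by exists A; split=> // C /classE; apply: eq_class.
Qed.
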